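(* Let $(x_i)_{i\in\mathbf Z}$ be an admissible frontier which is ultimately periodic, and let $t$ be the $SL_2$-tiling with values in $\mathbf N$ extending its embedding (as in Theorem 3). Then for every point $Q\in\mathbf Z^2$ and every nonzero vector $v=(a,b)\in\mathbf Z^2$ with $ab\le0$, the ray $(t(Q+nv))_{n\in\mathbf N}$ is $\mathbf N$-rational.
   Context: Cartesian coordinates on $\mathbf Z^2$ (first coordinate to the right, second upward). An $SL_2$-tiling is $t:\mathbf Z^2\to\mathbf N$ with $t(a,b+1)t(a+1,b)-t(a,b)t(a+1,b+1)=1$ for all $(a,b)$. A frontier is a bi-infinite word over $\{x,y\}$, admissible if neither $(x_n)_{n\ge0}$ nor $(x_n)_{n\le0}$ is ultimately constant; it is embedded as lattice points $P_i$ with $P_i-P_{i-1}=(1,0)$ if $x_i=x$, $(0,1)$ if $x_i=y$, and the tiling extends it if $t(P_i)=1$ for all $i$ (such a tiling exists and is unique). The frontier is ultimately periodic if there are $p\ge1$ and $n_0,n_0'\in\mathbf Z$ with $x_n=x_{n+p}$ for $n\ge n_0$ and $x_n=x_{n-p}$ for $n\le n_0'$. A sequence $(a_n)$ over $\mathbf N$ is $\mathbf N$-rational if $a_n=\lambda M^n\gamma$ for all $n$, for some $\lambda\in\mathbf N^{1\times r}$, $M\in\mathbf N^{r\times r}$, $\gamma\in\mathbf N^{r\times1}$. *)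

From HB Require Import structures.
From mathcomp Require Import all_boot all_order all_algebra.
Set Implicit Arguments. Unset Strict Implicit. Unset Printing Implicit Defensive.
Import Order.TTheory GRing.Theory Num.Theory.
Local Open Scope ring_scope.

Inductive letter := lx | ly.

Definition letter_eqb (a b : letter) : bool :=
  match a, b with lx, lx | ly, ly => true | _, _ => false end.

Definition frontier := int -> letter.

Definition point := (int * int)%type.

Definition padd (P Q : point) : point := (P.1 + Q.1, P.2 + Q.2).
Definition pscale (n : nat) (v : point) : point := (v.1 *+ n, v.2 *+ n).

Definition SL2_tiling (t : point -> nat) : Prop :=
  forall a b : int,
    (t (a, b + 1))%:Z * (t (a + 1, b))%:Z - (t (a, b))%:Z * (t (a + 1, b + 1))%:Z = 1.

Definition fwd_ult_const (x : frontier) : Prop :=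
  exists (N : int) (c : letter), forall n : int, N <= n -> x n = c.
Definition bwd_ult_const (x : frontier) : Prop :=
  exists (N : int) (c : letter), forall n : int, n <= N -> x n = c.

Definition admissible (x : frontier) : Prop :=
  ~ fwd_ult_const x /\ ~ bwd_ult_const x.

Definition ult_periodic (x : frontier) : Prop :=
  exists (p : nat) (n0 n0' : int), (1 <= p)%N /\
    (forall n : int, n0 <= n -> x n = x (n + p%:Z)) /\
    (forall n : int, n <= n0' -> x n = x (n - p%:Z)).

Definition step (l : letter) : point :=
  match l with lx => (1, 0) | ly => (0, 1) end.

Definition embedding (x : frontier) (P : int -> point) : Prop :=
  forall i : int, P i = padd (P (i - 1)) (step (x i)).

Definition extends (t : point -> nat) (P : int -> point) : Prop :=
  forall i : int, t (P i) = 1%N.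

Definition N_rational (a : nat -> nat) : Prop :=
  exists (r : nat) (lambda : 'rV[nat]_r) (M : 'M[nat]_r) (gamma : 'cV[nat]_r),
    forall n : nat, a n = (lambda *m iter n (mulmx M) gamma) 0 0.

From HB Require Import structures.
From mathcomp Require Import all_boot all_order all_algebra zify.
From Stdlib Require Import Classical.
Set Implicit Arguments. Unset Strict Implicit. Unset Printing Implicit Defensive.
Import Order.TTheory GRing.Theory Num.Theory.
Local Open Scope ring_scope.

(* Write X_k, Y_k for the coordinates of P_k and mu(x) = [[1,1],[0,1]], mu(y) = [[1,0],[1,1]].
   If x_i = y, x_j = x and i < j, then t(X_j, Y_i) = (0 1) mu(x_(i+1)) ... mu(x_(j-1)) (1 1)^T;
   this follows by induction on j - i from the exchange relation of the tiling.  Along a ray of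
   direction (a, -b) with a, b >= 0 the points are such corners (X_(j_n), Y_(i_n)), where j_n
   eventually runs through the periodic forward tail of the frontier and i_n through the periodic
   backward tail.  The word for n + 1 is the word for n multiplied on the left by the letters of
   the b new rows and on the right by those of the a new columns, and by periodicity both factors
   are ultimately periodic in n.  Hence the word is produced by a finite automaton with matrix
   weights and the ray is N-rational.  The opposite quadrant is reduced to this one by the half
   turn of the plane. *)

(** * N-rational sequences *)

Lemma eq_N_rational (u w : nat -> nat) : u =1 w -> N_rational w -> N_rational u.
Proof. by move=> uw [r [lam [M [gam wE]]]]; exists r, lam, M, gam => n; rewrite uw. Qed.

Lemma N_rational_cons (u : nat -> nat) : N_rational (fun n => u n.+1) -> N_rational u.
Proof.
move=> [r [lam [M [gam uE]]]].
exists (r + 1)%N, (row_mx lam (u 0%N)%:M), (block_mx M gam 0 0), (col_mx 0 1).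
have iterE n : iter n.+1 (mulmx (block_mx M gam 0 0)) (col_mx 0 1) = col_mx (iter n (mulmx M) gam) 0.
  elim: n => [|n /= ->]; first by rewrite /= mul_block_col !mulmx0 !mulmx1 ?mul0mx ?addr0 ?add0r.
  by rewrite mul_block_col !mulmx0 ?mul0mx ?addr0.
case=> [|n]; last by rewrite iterE mul_row_col mulmx0 addr0 uE.
by rewrite /= mul_row_col mulmx0 mulmx1 add0r mxE.
Qed.

Lemma N_rational_drop (u : nat -> nat) (N : nat) :
  N_rational (fun n => u (N + n)%N) -> N_rational u.
Proof.
elim: N u => [|N IH] u uE; first exact: uE.
apply/N_rational_cons/IH; exact: eq_N_rational uE.
Qed.

Definition linrec (I : finType) (M : I -> I -> nat) (w : I -> nat) (i : I) :=
  \sum_j M i j * w j.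

Lemma N_rational_linrec (I : finType) (lam gam : I -> nat) (M : I -> I -> nat) :
  N_rational (fun n => \sum_i lam i * iter n (linrec M) gam i).
Proof.
pose e := @enum_val I predT.
exists #|I|, (\row_k lam (e k)), (\matrix_(k, l) M (e k) (e l)), (\col_k gam (e k)) => n.
have iterE m : iter m (mulmx (\matrix_(k, l) M (e k) (e l))) (\col_k gam (e k))
    = \col_k iter m (linrec M) gam (e k).
  elim: m => [|m /= ->]; apply/matrixP => k l; rewrite !mxE //.
  rewrite /linrec (reindex e) /=; last exact: onW_bij (@enum_val_bij I).
  by apply: eq_bigr => j _; rewrite !mxE.
rewrite iterE mxE (reindex e) /=; last exact: onW_bij (@enum_val_bij I).
by apply: eq_bigr => j _; rewrite !mxE.
Qed.

(** * Unimodular 2 x 2 matrices over nat *)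

Definition mx2 (a b c d : nat) : 'M[nat]_2 :=
  \matrix_(i, j) if i == 0 then (if j == 0 then a else b) else (if j == 0 then c else d).

Lemma sum_I2 (F : 'I_2 -> nat) : \sum_k F k = F 0 + F 1.
Proof. by rewrite !big_ord_recl big_ord0 addr0 (_ : lift ord0 ord0 = 1) //; exact/val_inj. Qed.

Lemma mul2E (A B : 'M[nat]_2) i j : (A * B) i j = A i 0 * B 0 j + A i 1 * B 1 j.
Proof. by rewrite -mulmxE mxE sum_I2. Qed.

Lemma ord2P (i : 'I_2) : i = 0 \/ i = 1.
Proof. by case: i => -[|[|//]] Hi; [left | right]; apply/val_inj. Qed.

Lemma mx2P (A B : 'M[nat]_2) :
  A 0 0 = B 0 0 -> A 0 1 = B 0 1 -> A 1 0 = B 1 0 -> A 1 1 = B 1 1 -> A = B.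
Proof. by move=> *; apply/matrixP => i j; case: (ord2P i) => ->; case: (ord2P j) => ->. Qed.

Definition out (A : 'M[nat]_2) := A 1 0 + A 1 1.

Definition unimodular (A : 'M[nat]_2) : Prop := A 0 0 * A 1 1 = A 0 1 * A 1 0 + 1.

Definition mu (l : letter) : 'M[nat]_2 := if l is lx then mx2 1 1 0 1 else mx2 1 0 1 1.

Lemma unimodularM A B : unimodular A -> unimodular B -> unimodular (A * B).
Proof.
rewrite /unimodular !mul2E; move: (A 0 0) (A 0 1) (A 1 0) (A 1 1) (B 0 0) (B 0 1) (B 1 0) (B 1 1).
move=> a b c d a' b' c' d'; nia.
Qed.

Lemma unimodular1 : unimodular 1.
Proof. by rewrite /unimodular !mxE. Qed.

Lemma unimodular_mu l : unimodular (mu l).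
Proof. by case: l; rewrite /unimodular !mxE. Qed.

Lemma out_gt0 A : unimodular A -> (0 < out A)%N.
Proof. rewrite /unimodular /out; move: (A 0 0) (A 0 1) (A 1 0) (A 1 1) => a b c d; nia. Qed.

Lemma mu_lxX n : mu lx ^+ n = mx2 1 n 0 1.
Proof.
elim: n => [|n IH]; first by apply: mx2P; rewrite !mxE.
by rewrite exprSr IH; apply: mx2P; rewrite mul2E !mxE /=; lia.
Qed.

Lemma mu_lyX n : mu ly ^+ n = mx2 1 0 n 1.
Proof.
elim: n => [|n IH]; first by apply: mx2P; rewrite !mxE.
by rewrite exprSr IH; apply: mx2P; rewrite mul2E !mxE /=; lia.
Qed.

Lemma out_exchange (M : 'M[nat]_2) (m n : nat) : unimodular M ->
  out M * out (mu lx ^+ m * mu ly * M * mu lx * mu ly ^+ n)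
  = 1 + out (mu lx ^+ m * mu ly * M) * out (M * mu lx * mu ly ^+ n).
Proof.
rewrite /unimodular /out mu_lxX mu_lyX !mul2E !mxE /=.
move: (M 0 0) (M 0 1) (M 1 0) (M 1 1) => a b c d; nia.
Qed.

(** * Matrix-weighted automata *)

Lemma sum_triple (S : finType) (F : S * 'I_2 * 'I_2 -> nat) :
  \sum_u F u = \sum_(s : S) \sum_(k : 'I_2) \sum_(l : 'I_2) F (s, k, l).
Proof.
transitivity (\sum_(sk : S * 'I_2) \sum_(l : 'I_2) F (sk, l)).
  by rewrite pair_bigA; apply: eq_bigr => -[].
by rewrite [RHS]pair_bigA; apply: eq_bigr => -[].
Qed.

Lemma N_rational_automaton (S : finType) (next : S -> S) (A B : S -> 'M[nat]_2)
    (s : nat -> S) (V : nat -> 'M[nat]_2) :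
  (forall n, s n.+1 = next (s n)) -> (forall n, V n.+1 = A (s n) * V n * B (s n)) ->
  N_rational (fun n => out (V n)).
Proof.
move=> s_next V_next.
pose lam (u : S * 'I_2 * 'I_2) := nat_of_bool (u.1.2 == 1).
pose M (u w : S * 'I_2 * 'I_2) :=
  (u.1.1 == next w.1.1 : nat) * (A w.1.1 u.1.2 w.1.2 * B w.1.1 w.2 u.2).
pose w n (u : S * 'I_2 * 'I_2) := (u.1.1 == s n : nat) * V n u.1.2 u.2.
have sum_state n F : \sum_(u : S * 'I_2 * 'I_2) (u.1.1 == s n : nat) * F u
    = \sum_(k : 'I_2) \sum_(l : 'I_2) F (s n, k, l).
  rewrite sum_triple (bigD1 (s n)) //= [X in _ + X]big1 ?addr0 => [|s' /negbTE ne_s].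
    by apply: eq_bigr => k _; apply: eq_bigr => l _; rewrite eqxx mul1r.
  by rewrite big1 // => k _; rewrite big1 // => l _; rewrite ne_s mul0r.
have iterE n u : iter n (linrec M) (w 0%N) u = w n u.
  elim: n u => [//|n IH] [[s' k'] l'] /=.
  rewrite {1}/linrec (eq_bigr (fun u => (u.1.1 == s n : nat) * (V n u.1.2 u.2 * M (s', k', l') u)))
    => [|u _]; last by rewrite IH /w mulrC -mulrA.
  rewrite sum_state /M /w /= s_next V_next.
  case: (s' == next (s n)); rewrite ?mul0r ?mul1r; last first.
    by rewrite big1 // => k _; rewrite big1 // => l _; rewrite mulr0.
  rewrite !sum_I2 !mul2E.
  move: (A (s n) k' 0) (A (s n) k' 1) (B (s n) 0 l') (B (s n) 1 l') => a0 a1 b0 b1.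
  move: (V n 0 0) (V n 0 1) (V n 1 0) (V n 1 1) => v00 v01 v10 v11; nia.
apply: eq_N_rational (N_rational_linrec lam (w 0%N) M) => n.
rewrite (eq_bigr (fun u => (u.1.1 == s n : nat) * (lam u * V n u.1.2 u.2))) => [|u _].
  by rewrite sum_state !sum_I2 /lam /out /= !mul0r !add0r !mul1r.
by rewrite iterE /w mulrCA.
Qed.

Lemma periodic_modn (T : Type) (f : nat -> T) (N d : nat) :
  (forall n, (N <= n)%N -> f (n + d)%N = f n) -> forall n, f (N + n)%N = f (N + n %% d)%N.
Proof.
move=> fP n; rewrite {1}(divn_eq n d); elim: (n %/ d)%N => [|k IH]; first by rewrite mul0n add0n.
have -> : (N + (k.+1 * d + n %% d) = N + (k * d + n %% d) + d)%N by rewrite mulSnr; lia.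
by rewrite fP ?leq_addr.
Qed.

Lemma N_rational_periodic_products (u : nat -> nat) (L R V : nat -> 'M[nat]_2) (N dL dR : nat) :
  (0 < dL)%N -> (0 < dR)%N ->
  (forall n, (N <= n)%N -> L (n + dL)%N = L n) -> (forall n, (N <= n)%N -> R (n + dR)%N = R n) ->
  (forall n, (N <= n)%N -> V n.+1 = L n * V n * R n) ->
  (forall n, (N <= n)%N -> u n = out (V n)) -> N_rational u.
Proof.
move=> dL_gt0 dR_gt0 Lper Rper V_next uV; apply: (@N_rational_drop _ N).
apply: (@eq_N_rational _ (fun n => out (V (N + n)%N))) => [n|]; first by rewrite uV ?leq_addr.
pose res n : 'I_dL * 'I_dR := (Ordinal (ltn_pmod n dL_gt0), Ordinal (ltn_pmod n dR_gt0)).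
pose next (r : 'I_dL * 'I_dR) : 'I_dL * 'I_dR :=
  (Ordinal (ltn_pmod (r.1).+1 dL_gt0), Ordinal (ltn_pmod (r.2).+1 dR_gt0)).
apply: (N_rational_automaton (next := next) (A := fun r => L (N + r.1)%N)
          (B := fun r => R (N + r.2)%N) (s := res) (V := fun n => V (N + n)%N)) => n.
  by congr pair; apply/val_inj; rewrite /= -[(n %% _).+1]addn1 modnDml addn1.
by rewrite addnS V_next ?leq_addr // (periodic_modn Lper) (periodic_modn Rper).
Qed.

(** * Frontiers and the entry formula *)

Lemma letter_eqP : Equality.axiom letter_eqb.
Proof. by do 2 case; constructor. Qed.

HB.instance Definition _ := hasDecEq.Build letter letter_eqP.

Lemma int_ind_ge (k : int) (Q : int -> Prop) :
  Q k -> (forall l, k < l -> Q (l - 1) -> Q l) -> forall l, k <= l -> Q l.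
Proof.
move=> Qk QS l kl; have [n ->] : exists n : nat, l = k + n%:Z by exists (absz (l - k)); lia.
elim: n => [|n IH]; first by rewrite addr0.
by apply: QS; [lia | rewrite (_ : k + n.+1%:Z - 1 = k + n%:Z) //; lia].
Qed.

Lemma int_ind_le (k : int) (Q : int -> Prop) :
  Q k -> (forall l, l < k -> Q (l + 1) -> Q l) -> forall l, l <= k -> Q l.
Proof.
move=> Qk QP l lk; have [n ->] : exists n : nat, l = k - n%:Z by exists (absz (k - l)); lia.
elim: n => [|n IH]; first by rewrite subr0.
by apply: QP; [lia | rewrite (_ : k - n.+1%:Z + 1 = k - n%:Z) //; lia].
Qed.

Definition coord (c : letter) (q : point) : int := if c is lx then q.1 else q.2.

Lemma coord_step c l : coord c (step l) = (l == c)%:Z.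
Proof. by case: c; case: l. Qed.

Section Frontier.

Variables (x : frontier) (P : int -> point).
Hypothesis embP : embedding x P.
Hypothesis admx : admissible x.

Definition level (c : letter) (k : int) : int := coord c (P k).

Lemma level_step c k : level c k = level c (k - 1) + (x k == c)%:Z.
Proof. by rewrite /level embP; case: c => /=; rewrite -coord_step. Qed.

Lemma level_mono c : {homo level c : k l / k <= l}.
Proof.
move=> k; apply: int_ind_ge => // l _; rewrite [level c l]level_step; lia.
Qed.

Lemma level_lt c k l : k < l -> x l = c -> level c k < level c l.
Proof.
move=> kl xl; rewrite [level c l]level_step xl eqxx.
have := level_mono c (_ : k <= l - 1); lia.
Qed.

Lemma level_const c k l : k <= l -> (forall m, k < m <= l -> x m != c) -> level c k = level c l.
Proof.
move: l; apply: int_ind_ge => // l kl IH xl.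
rewrite [level c l]level_step (negbTE (xl l _)) ?IH ?addr0 // => [m mE|]; [apply: xl|]; lia.
Qed.

Definition other (c : letter) : letter := if c is lx then ly else lx.

Lemma other_neq c l : l != c -> l = other c.
Proof. by case: c; case: l. Qed.

Lemma occurs_after c N : exists2 k, N <= k & x k = c.
Proof.
apply: NNPP => no_c; apply: admx.1; exists N, (other c) => n Nn.
by apply/other_neq/eqP => xn; apply: no_c; exists n.
Qed.

Lemma occurs_before c N : exists2 k, k <= N & x k = c.
Proof.
apply: NNPP => no_c; apply: admx.2; exists N, (other c) => n nN.
by apply/other_neq/eqP => xn; apply: no_c; exists n.
Qed.

Lemma level_below c A : exists k, level c k < A.
Proof.
suff: forall m : nat, exists k, level c k <= level c 0 - m%:Z.
  by move=> /(_ (absz (level c 0 - A + 1))) [k ?]; exists k; lia.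
elim=> [|m [k km]]; first by exists 0; lia.
have [k' k'k xk'] := occurs_before c k.
have : level c (k' - 1) < level c k' by apply: level_lt => //; lia.
by have := level_mono c k'k; exists (k' - 1); lia.
Qed.

Lemma level_above c A : exists k, A <= level c k.
Proof.
suff: forall m : nat, exists k, level c 0 + m%:Z <= level c k.
  by move=> /(_ (absz (A - level c 0))) [k ?]; exists k; lia.
elim=> [|m [k km]]; first by exists 0; lia.
have [k' kk' xk'] := occurs_after c (k + 1).
have : level c k < level c k' by apply: level_lt => //; lia.
by exists k'; lia.
Qed.

Lemma level_surj c A : exists k, (x k == c) && (level c k == A).
Proof.
have [k0 k0A] := level_below c A; have [k1 k1A] := level_above c A.
have : exists n : nat, A <= level c (k0 + n%:Z).
  exists (absz (k1 - k0)); have [k01|k10] := lerP k0 k1; first by rewrite (_ : _ + _ = k1) //; lia.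
  by have := level_mono c (ltW k10); lia.
case/ex_minnP => n An min_n; exists (k0 + n%:Z).
have n_gt0 : (0 < n)%N by case: n An {min_n} => //; rewrite addr0; lia.
have : level c (k0 + n.-1%:Z) < A.
  by rewrite ltNge; apply/negP => /min_n; lia.
have := level_step c (k0 + n%:Z); rewrite (_ : k0 + n%:Z - 1 = k0 + n.-1%:Z); last by lia.
by case: (x _ == c) => /= E below; [apply/eqP | exfalso]; lia.
Qed.

Lemma level_inj c k l : x k = c -> x l = c -> level c k = level c l -> k = l.
Proof.
move=> xk xl; have [kl|lk|//] := ltgtP k l.
  by have := level_lt kl xl; lia.
by have := level_lt lk xk; lia.
Qed.

Definition idx (c : letter) (A : int) : int := xchoose (level_surj c A).

Lemma idx_letter c A : x (idx c A) = c.
Proof. by have /andP[/eqP] := xchooseP (level_surj c A). Qed.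

Lemma level_idx c A : level c (idx c A) = A.
Proof. by have /andP[_ /eqP] := xchooseP (level_surj c A). Qed.

Lemma idx_level c k : x k = c -> idx c (level c k) = k.
Proof. by move=> xk; apply: (level_inj (idx_letter _ _) xk); rewrite level_idx. Qed.

Lemma idx_lt c : {homo idx c : A B / A < B}.
Proof.
move=> A B AB; rewrite ltNge; apply/negP => /(level_mono c).
by rewrite !level_idx; lia.
Qed.

Lemma idx_le c : {homo idx c : A B / A <= B}.
Proof. by move=> A B; rewrite le_eqVlt => /predU1P[-> //|/(idx_lt c)/ltW]. Qed.

Lemma next_occurrence c i m : i < m -> x m = c ->
  exists2 i', i < i' <= m & x i' = c /\ forall k, i < k < i' -> x k != c.
Proof.
move=> im xm; have im' : i + (absz (m - i)).-1.+1%:Z = m by lia.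
have : exists n : nat, x (i + n.+1%:Z) == c by exists (absz (m - i)).-1; rewrite im' xm.
case/ex_minnP => n /eqP xn min_n; exists (i + n.+1%:Z).
  by have := min_n (absz (m - i)).-1; rewrite im' xm eqxx => /(_ isT); lia.
split=> // k ik; apply/negP => /eqP xk.
have := min_n (absz (k - i)).-1; rewrite (_ : i + _ = k) ?xk ?eqxx //; lia.
Qed.

Lemma prev_occurrence c j :
  exists2 j', j' < j & x j' = c /\ forall k, j' < k < j -> x k != c.
Proof.
have [m mj xm] := occurs_before c (j - 1).
have : exists n : nat, x (j - n.+1%:Z) == c.
  by exists (absz (j - m)).-1; rewrite (_ : j - _ = m) ?xm //; lia.
case/ex_minnP => n /eqP xn min_n; exists (j - n.+1%:Z); first by lia.
split=> // k jk; apply/negP => /eqP xk.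
have := min_n (absz (j - k)).-1; rewrite (_ : j - _ = k) ?xk ?eqxx //; lia.
Qed.

(* mu (x i) * ... * mu (x (j - 1)); junk when j < i. *)
Definition word (i j : int) : 'M[nat]_2 := \prod_(0 <= k < absz (j - i)) mu (x (i + k%:Z)).

Lemma word_cat i m j : i <= m -> m <= j -> word i j = word i m * word m j.
Proof.
move=> im mj; rewrite /word (big_cat_nat _ (n := absz (m - i))) /=; [|lia|lia].
rewrite -{2}[absz (m - i)]add0n big_addn (_ : absz (j - i) - absz (m - i) = absz (j - m))%N; last by lia.
by congr (_ * _); apply: eq_bigr => k _; congr (mu (x _)); lia.
Qed.

Lemma word1 i : word i (i + 1) = mu (x i).
Proof. by rewrite /word (_ : absz _ = 1%N) ?big_nat1 ?addr0 //; lia. Qed.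

Lemma word_const c i j : i <= j -> (forall k, i <= k < j -> x k = c) ->
  word i j = mu c ^+ absz (j - i).
Proof.
move=> ij xc; rewrite /word (eq_big_nat _ _ (F2 := fun=> mu c)) ?prodr_const_nat ?subn0 //.
by move=> k /andP[_ kn]; rewrite xc //; lia.
Qed.

Lemma unimodular_word i j : unimodular (word i j).
Proof. by apply: big_ind => //; [exact: unimodular1 | exact: unimodularM | move=> *; exact: unimodular_mu]. Qed.

Lemma word_split i m j : i <= m < j -> word i j = word i m * mu (x m) * word (m + 1) j.
Proof.
by move=> /andP[im mj]; rewrite (word_cat im (ltW mj)) (@word_cat m (m + 1) j) ?word1 ?mulrA //; lia.
Qed.

Lemma out_word_exchange i i' j' j : i < i' -> i' < j' -> j' < j ->
    (forall k, i < k < i' -> x k = lx) -> x i' = ly ->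
    x j' = lx -> (forall k, j' < k < j -> x k = ly) ->
  out (word (i' + 1) j') * out (word (i + 1) j)
  = 1 + out (word (i + 1) j') * out (word (i' + 1) j).
Proof.
move=> ii' i'j' j'j xl xi' xj' yl.
have Xal : word (i + 1) i' = mu lx ^+ absz (i' - (i + 1))%R.
  by apply: word_const => [|k ?]; [|apply: xl]; lia.
have Ybe : word (j' + 1) j = mu ly ^+ absz (j - (j' + 1))%R.
  by apply: word_const => [|k ?]; [|apply: yl]; lia.
have E1 : word (i + 1) j' = word (i + 1) i' * mu ly * word (i' + 1) j'.
  by rewrite (word_split (m := i')) ?xi' //; lia.
have E2 : word (i' + 1) j = word (i' + 1) j' * mu lx * word (j' + 1) j.
  by rewrite (word_split (m := j')) ?xj' //; lia.
have E3 : word (i + 1) j = word (i + 1) j' * mu lx * word (j' + 1) j.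
  by rewrite (word_split (m := j')) ?xj' //; lia.
by rewrite E3 E2 E1 Xal Ybe ?mulrA; apply/out_exchange/unimodular_word.
Qed.

Lemma out_word_xy i m j : i < m < j ->
    (forall k, i < k < m -> x k = lx) -> (forall k, m <= k < j -> x k = ly) ->
  out (word (i + 1) j) = (out (word (m + 1) j)).+1.
Proof.
move=> /andP[im mj] xl yl.
have Xal : word (i + 1) m = mu lx ^+ absz (m - (i + 1))%R.
  by apply: word_const => [|k ?]; [|apply: xl]; lia.
have Ybe k : m <= k <= j -> word k j = mu ly ^+ absz (j - k)%R.
  by move=> ?; apply: word_const => [|k' ?]; [|apply: yl]; lia.
rewrite (word_cat (m := m)) ?Xal ?Ybe; try lia.
by rewrite mu_lxX !mu_lyX /out !mul2E !mxE /=; lia.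
Qed.

Lemma level_next c k l : k < l -> x l = c -> (forall m, k < m < l -> x m != c) ->
  level c l = level c k + 1.
Proof.
move=> kl xl free; rewrite level_step xl eqxx (@level_const c k (l - 1)) //; first lia.
by move=> m ?; apply: free; lia.
Qed.

Section Tiling.

Variable t : point -> nat.
Hypotheses (tileP : SL2_tiling t) (extP : extends t P).

Lemma tile_level k : t (level lx k, level ly k) = 1%N.
Proof. by rewrite /level /= -surjective_pairing extP. Qed.

Lemma tile_exchange (a b : int) :
  t (a, b + 1) * t (a + 1, b) = t (a, b) * t (a + 1, b + 1) + 1 :> nat.
Proof. by have := tileP a b; lia. Qed.

Lemma tile_on_frontier_row i j : i <= j -> (forall k, i < k <= j -> x k != ly) ->
  t (level lx j, level ly i) = 1%N.
Proof. by move=> ij no_ly; rewrite (level_const ij no_ly) tile_level. Qed.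

Lemma tile_on_frontier_col i j : j <= i -> (forall k, j < k <= i -> x k != lx) ->
  t (level lx j, level ly i) = 1%N.
Proof. by move=> ji no_lx; rewrite (level_const ji no_lx) tile_level. Qed.

(* With i' the first y after i and j' the last x before j, the exchange relation on the unit
   square with corners (X_j', Y_i) and (X_j, Y_i') expresses t(X_j, Y_i) through corners closer
   to the frontier. *)
Theorem tile_word i j : x i = ly -> x j = lx -> i < j ->
  t (level lx j, level ly i) = out (word (i + 1) j).
Proof.
move=> xi xj; have [n] := ubnP (absz (j - i)); elim: n => // n IH in i j xi xj *; move=> ltn ij.
have [m mj [xm not_ly]] := prev_occurrence ly j.
have [mi | im] := lerP m i.
  have no_ly k : i < k <= j -> x k != ly.
    by move=> ?; have [->|?] := eqVneq k j; [rewrite xj | apply: not_ly; lia].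
  rewrite (tile_on_frontier_row (ltW ij) no_ly) (@word_const lx); first by rewrite mu_lxX /out !mxE.
    by lia.
  by move=> k ?; apply: (@other_neq ly); apply: no_ly; lia.
have [i' /andP[ii' i'm] [xi' not_ly']] := next_occurrence im xm.
have [j' j'j [xj' not_lx]] := prev_occurrence lx j.
have all_lx k : i < k < i' -> x k = lx by move=> ?; apply: (@other_neq ly); apply: not_ly'.
have all_ly k : j' < k < j -> x k = ly by move=> ?; apply: (@other_neq lx); apply: not_lx.
have := tile_exchange (level lx j') (level ly i).
rewrite -(level_next ii' xi' not_ly') -(level_next j'j xj not_lx) (IH i' j) //; try lia.
have [i'j' | j'i' | ei'j'] := ltgtP i' j'; last by move: xi'; rewrite ei'j' xj'.
  rewrite (IH i' j') ?(IH i j') //; try lia.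
  have := out_word_exchange ii' i'j' j'j all_lx xi' xj' all_ly.
  move=> E K; apply/eqP; rewrite -(eqn_pmul2l (out_gt0 (unimodular_word (i' + 1) j'))).
  by apply/eqP; exact: etrans K (etrans (addrC _ _) (esym E)).
have -> : t (level lx j', level ly i') = 1%N.
  by apply: tile_on_frontier_col => [|k ?]; [lia | apply: not_lx; lia].
have -> : t (level lx j', level ly i) = 1%N.
  have [ij' | j'i] := ltrP i j'.
    by apply: tile_on_frontier_row => [|k ?]; [lia | apply: not_ly'; lia].
  by apply: tile_on_frontier_col => // k ?; apply: not_lx; lia.
have -> : out (word (i + 1) j) = (out (word (i' + 1) j)).+1.
  by apply: out_word_xy => [|k ?|k ?]; [lia | exact: all_lx | apply: all_ly; lia].
by rewrite !mul1r => ->; exact: addn1.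
Qed.

End Tiling.
(** * Rays along a periodic frontier *)

Section Periodic.

Variables (p : nat) (n0 n0' : int).
Hypothesis p_gt0 : (0 < p)%N.
Hypothesis x_fwd : forall n, n0 <= n -> x n = x (n + p%:Z).
Hypothesis x_bwd : forall n, n <= n0' -> x n = x (n - p%:Z).

Lemma x_fwd_shift k n : n0 <= n -> x (n + (k * p)%:Z) = x n.
Proof.
move=> n0n; elim: k => [|k IH]; first by rewrite addr0.
by rewrite mulSnr PoszD addrA -x_fwd ?IH //; lia.
Qed.

Lemma x_bwd_shift k n : n <= n0' -> x (n - (k * p)%:Z) = x n.
Proof.
move=> nn0'; elim: k => [|k IH]; first by rewrite subr0.
by rewrite mulSnr PoszD opprD addrA -x_bwd ?IH //; lia.
Qed.

Definition fwd_period (c : letter) : int := level c (n0 + p%:Z) - level c n0.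
Definition bwd_period (c : letter) : int := level c n0' - level c (n0' - p%:Z).

Lemma level_fwd_shift c k n : n0 <= n ->
  level c (n + (k * p)%:Z) = level c n + k%:Z * fwd_period c.
Proof.
have shift1 m : n0 <= m -> level c (m + p%:Z) = level c m + fwd_period c.
  move: m; apply: int_ind_ge => [|m n0m IH]; first by rewrite /fwd_period; lia.
  rewrite [level c (m + _)]level_step [level c m]level_step -x_fwd; last lia.
  rewrite (_ : m + p%:Z - 1 = m - 1 + p%:Z) ?IH; lia.
move=> n0n; elim: k => [|k IH]; first by rewrite addr0 mul0r addr0.
rewrite mulSnr PoszD addrA shift1 ?IH; lia.
Qed.

Lemma level_bwd_shift c k n : n <= n0' ->
  level c (n - (k * p)%:Z) = level c n - k%:Z * bwd_period c.
Proof.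
have shift1 m : m <= n0' -> level c (m - p%:Z) = level c m - bwd_period c.
  move: m; apply: int_ind_le => [|m mn0' IH]; first by rewrite /bwd_period; lia.
  move: IH; rewrite [level c (m + 1)]level_step [level c (m + 1 - p%:Z)]level_step -x_bwd; last lia.
  by rewrite (_ : m + 1 - p%:Z - 1 = m - p%:Z) ?addrK; lia.
move=> nn0'; elim: k => [|k IH]; first by rewrite subr0 mul0r subr0.
rewrite mulSnr PoszD opprD addrA shift1 ?IH; lia.
Qed.

Lemma fwd_period_gt0 c : 0 < fwd_period c.
Proof.
have ge0 : 0 <= fwd_period c by rewrite subr_ge0; apply: level_mono; lia.
rewrite lt_def ge0 andbT; apply/eqP => per0.
have [k ck] := level_above c (level c n0 + 1).
have : level c k <= level c (n0 + (absz (k - n0) * p)%:Z) by apply: level_mono; nia.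
by rewrite level_fwd_shift // per0; lia.
Qed.

Lemma bwd_period_gt0 c : 0 < bwd_period c.
Proof.
have ge0 : 0 <= bwd_period c by rewrite subr_ge0; apply: level_mono; lia.
rewrite lt_def ge0 andbT; apply/eqP => per0.
have [k ck] := level_below c (level c n0').
have : level c (n0' - (absz (n0' - k) * p)%:Z) <= level c k by apply: level_mono; nia.
by rewrite level_bwd_shift // per0; lia.
Qed.

Lemma idx_fwd_shift c k A : n0 <= idx c A ->
  idx c (A + k%:Z * fwd_period c) = idx c A + (k * p)%:Z.
Proof.
move=> n0i; rewrite -{1}(level_idx c A) -level_fwd_shift //.
by rewrite idx_level // x_fwd_shift // idx_letter.
Qed.

Lemma idx_bwd_shift c k A : idx c A <= n0' ->
  idx c (A - k%:Z * bwd_period c) = idx c A - (k * p)%:Z.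
Proof.
move=> in0'; rewrite -{1}(level_idx c A) -level_bwd_shift //.
by rewrite idx_level // x_bwd_shift // idx_letter.
Qed.

Lemma word_fwd_shift k i j : n0 <= i -> word (i + (k * p)%:Z) (j + (k * p)%:Z) = word i j.
Proof.
move=> n0i; rewrite /word (_ : j + _ - _ = j - i); last by lia.
by apply: eq_bigr => m _; rewrite -addrAC x_fwd_shift //; lia.
Qed.

Lemma word_bwd_shift k i j : i <= j -> j <= n0' + 1 ->
  word (i - (k * p)%:Z) (j - (k * p)%:Z) = word i j.
Proof.
move=> ij jn0'; rewrite /word (_ : j - _ - _ = j - i); last by lia.
by rewrite big_nat_cond [RHS]big_nat_cond; apply: eq_bigr => m /andP[/andP[_ mji] _];
  rewrite -addrAC x_bwd_shift //; lia.
Qed.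

Section Ray.

Variables (Q : point) (a b : nat).
Hypothesis ab_gt0 : (0 < a + b)%N.

Definition col (n : nat) : int := idx lx (Q.1 + a%:Z *+ n).
Definition row (n : nat) : int := idx ly (Q.2 - b%:Z *+ n).

Lemma col_le m n : (m <= n)%N -> col m <= col n.
Proof. by move=> mn; apply: idx_le; nia. Qed.

Lemma row_le m n : (m <= n)%N -> row n <= row m.
Proof. by move=> mn; apply: idx_le; nia. Qed.

Lemma col_grow n : (0 < a)%N -> col 0 + n%:Z <= col n.
Proof.
move=> a_gt0; elim: n => [|n IH]; first by lia.
have : col n < col n.+1 by apply: idx_lt; nia.
lia.
Qed.

Lemma row_grow n : (0 < b)%N -> row n <= row 0 - n%:Z.
Proof.
move=> b_gt0; elim: n => [|n IH]; first by lia.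
have : row n.+1 < row n by apply: idx_lt; nia.
lia.
Qed.

Lemma ray_eventually : exists N, forall n, (N <= n)%N ->
  [/\ row n < col n, a = 0%N \/ n0 <= col n & b = 0%N \/ row n <= n0'].
Proof.
exists (absz (row 0 - col 0) + absz (n0 - col 0) + absz (row 0 - n0') + 1)%N => n Nn.
have := col_le (leq0n n); have := row_le (leq0n n).
have [a0 | /(col_grow n) ?] := posnP a; have [b0 | /(row_grow n) ?] := posnP b; try by split; lia.
Qed.

Definition ray_word (n : nat) : 'M[nat]_2 := word (row n + 1) (col n).

Lemma ray_word_next n : row n < col n ->
  ray_word n.+1 = word (row n.+1 + 1) (row n + 1) * ray_word n * word (col n) (col n.+1).
Proof.
move=> rc; have := row_le (leqnSn n); have := col_le (leqnSn n) => ? ?.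
rewrite /ray_word (@word_cat _ (row n + 1)); try lia.
by rewrite (@word_cat (row n + 1) (col n) (col n.+1)) ?mulrA //; lia.
Qed.

Lemma col_shift n : a = 0%N \/ n0 <= col n ->
  col (n + absz (fwd_period lx)) = col n + (a * p)%:Z.
Proof.
case=> [a0 | n0c]; first by rewrite /col a0 mul0n addr0; congr idx; lia.
have := fwd_period_gt0 lx; rewrite /col -idx_fwd_shift // => ?.
by congr idx; rewrite mulrnDr; nia.
Qed.

Lemma row_shift n : b = 0%N \/ row n <= n0' ->
  row (n + absz (bwd_period ly)) = row n - (b * p)%:Z.
Proof.
case=> [b0 | rn0']; first by rewrite /row b0 mul0n subr0; congr idx; lia.
have := bwd_period_gt0 ly; rewrite /row -idx_bwd_shift // => ?.
by congr idx; rewrite mulrnDr; nia.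
Qed.

Variable t : point -> nat.
Hypotheses (tileP : SL2_tiling t) (extP : extends t P).

Lemma tile_ray n : row n < col n -> t (padd Q (pscale n (a%:Z, - b%:Z))) = out (ray_word n).
Proof.
move=> rc; rewrite /ray_word -(tile_word tileP extP) ?idx_letter //.
by rewrite !level_idx /padd /pscale /= mulNrn.
Qed.

Theorem N_rational_ray : N_rational (fun n => t (padd Q (pscale n (a%:Z, - b%:Z)))).
Proof.
have [N ev] := ray_eventually.
have := fwd_period_gt0 lx; have := bwd_period_gt0 ly => ? ?.
apply: (@N_rational_periodic_products _ (fun n => word (row n.+1 + 1) (row n + 1))
  (fun n => word (col n) (col n.+1)) ray_word N (absz (bwd_period ly)) (absz (fwd_period lx)));
  try lia.
- move=> n /ev[_ _ rn]; rewrite -addSn !row_shift //; last first.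
    by case: rn => [|rn]; [left | right; have := row_le (leqnSn n); lia].
  have [b0|b_gt0] := posnP b; first by rewrite b0 mul0n !subr0.
  have -> : row n.+1 - (b * p)%:Z + 1 = row n.+1 + 1 - (b * p)%:Z by lia.
  have -> : row n - (b * p)%:Z + 1 = row n + 1 - (b * p)%:Z by lia.
  by apply: word_bwd_shift; have := row_le (leqnSn n); case: rn; lia.
- move=> n /ev[_ cn _]; rewrite -addSn !col_shift //; last first.
    by case: cn => [|cn]; [left | right; have := col_le (leqnSn n); lia].
  have [a0|a_gt0] := posnP a; first by rewrite a0 mul0n !addr0.
  by apply: word_fwd_shift; case: cn; lia.
- by move=> n /ev[rc _ _]; exact: ray_word_next.
- by move=> n /ev[rc _ _]; exact: tile_ray.
Qed.

End Ray.
End Periodic.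
End Frontier.

(** * Reduction to one quadrant *)

(* The half turn q |-> -q of the plane, read on the frontier as k |-> 1 - k. *)
Definition reflect (x : frontier) : frontier := fun k => x (1 - k).
Definition pneg (q : point) : point := (- q.1, - q.2).

Lemma pnegK : involutive pneg.
Proof. by case=> a b; rewrite /pneg /= !opprK. Qed.

Lemma embedding_reflect x P : embedding x P -> embedding (reflect x) (fun k => pneg (P (- k))).
Proof.
move=> emb i; rewrite (_ : - (i - 1) = 1 - i); last by lia.
rewrite (emb (1 - i)) (_ : 1 - i - 1 = - i); last by lia.
by rewrite /pneg /padd /reflect /=; congr pair; lia.
Qed.

Lemma admissible_reflect x : admissible x -> admissible (reflect x).
Proof.
case=> fwd bwd; split=> -[N [c xc]]; [apply: bwd | apply: fwd]; exists (1 - N), c => n nN;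
  by rewrite -(xc (1 - n)) /reflect ?subKr //; lia.
Qed.

Lemma ult_periodic_reflect x : ult_periodic x -> ult_periodic (reflect x).
Proof.
case=> p [n0 [n0' [p_gt0 [fwd bwd]]]]; exists p, (1 - n0'), (1 - n0).
split=> //; split=> n nn; rewrite /reflect.
  have -> : 1 - (n + p%:Z) = 1 - n - p%:Z by lia.
  by rewrite -bwd //; lia.
have -> : 1 - (n - p%:Z) = 1 - n + p%:Z by lia.
by rewrite -fwd //; lia.
Qed.

Lemma SL2_tiling_reflect t : SL2_tiling t -> SL2_tiling (t \o pneg).
Proof.
move=> tile a b; rewrite /= /pneg /= !opprD.
have := tile (- a - 1) (- b - 1); rewrite !addrNK.
by move=> E; apply: etrans E; congr (_ - _); exact: mulrC.
Qed.

Lemma extends_reflect t P : extends t P -> extends (t \o pneg) (fun k => pneg (P (- k))).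
Proof. by move=> ext i; rewrite /= pnegK. Qed.

Lemma N_rational_descending_ray x P t (Q : point) (a b : nat) :
  admissible x -> ult_periodic x -> embedding x P -> SL2_tiling t -> extends t P ->
  (0 < a + b)%N -> N_rational (fun n => t (padd Q (pscale n (a%:Z, - b%:Z)))).
Proof.
move=> adm [p [n0 [n0' [p_gt0 [fwd bwd]]]]] emb tile ext ab_gt0.
exact: (N_rational_ray emb adm p_gt0 fwd bwd Q ab_gt0 tile ext).
Qed.

Theorem corollary1 (x : frontier) (P : int -> point) (t : point -> nat)
  (Hadm : admissible x) (Hper : ult_periodic x)
  (Hemb : embedding x P) (Ht : SL2_tiling t) (Hext : extends t P)
  (Q v : point) (Hv : v != (0, 0)) (Hab : v.1 * v.2 <= 0) :
  N_rational (fun n : nat => t (padd Q (pscale n v))).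
Proof.
have ab_gt0 : (0 < absz v.1 + absz v.2)%N by move: Hv; case: v {Hab} => v1 v2; rewrite xpair_eqE /=; lia.
have [[v1_ge0 v2_le0] | [v1_le0 v2_ge0]] : (0 <= v.1 /\ v.2 <= 0) \/ (v.1 <= 0 /\ 0 <= v.2) by nia.
  apply: eq_N_rational (N_rational_descending_ray Q Hadm Hper Hemb Ht Hext ab_gt0) => n.
  by rewrite /padd /pscale /=; congr (t (_, _)); nia.
have := N_rational_descending_ray (pneg Q) (admissible_reflect Hadm) (ult_periodic_reflect Hper)
  (embedding_reflect Hemb) (SL2_tiling_reflect Ht) (extends_reflect Hext) ab_gt0.
apply: eq_N_rational => n /=.
by rewrite /pneg /padd /pscale /=; congr (t (_, _)); nia.
Qed.
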